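(* For all positive integers $n$ and $k$, $$\sum_{i=1}^{k}\frac{(-1)^{i-1}}{i}\binom{in}{k}\binom{k}{i}=\frac{(-1)^{k-1}n}{k}.$$
   Context: Binomial coefficients $\binom{m}{j}$ for nonnegative integers $m,j$ are the usual ones, with $\binom{m}{j}=0$ when $j>m$. *)

From mathcomp Require Import all_boot all_order all_algebra.

From mathcomp Require Import all_boot all_order all_algebra.
From mathcomp Require Import ring.
Set Implicit Arguments.
Unset Strict Implicit.
Unset Printing Implicit Defensive.

Import GRing.Theory Num.Theory.
Local Open Scope ring_scope.

(* For 0 < i we have C(in, k) / i = (n / k) C(in - 1, k - 1), and
   (k - 1)! C(in - 1, k - 1) = P(i) for the polynomial
   P(x) = (nx - 1)(nx - 2)...(nx - k + 1) of degree k - 1.  The k-th finite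
   difference sum_(i = 0..k) (-1)^i C(k, i) P(i) of a polynomial of degree
   less than k vanishes, so the sum over 1 <= i <= k is -P(0) = (-1)^k (k - 1)!,
   and the identity follows after multiplying by -n / k!. *)

Section FiniteDifferences.
Variable R : comNzRingType.

Lemma alternating_bin_sumS (f : nat -> R) k :
  \sum_(0 <= i < k.+2) (-1) ^+ i * 'C(k.+1, i)%:R * f i
  = \sum_(0 <= i < k.+1) (-1) ^+ i * 'C(k, i)%:R * (f i - f i.+1).
Proof.
have shifted : \sum_(0 <= i < k.+2) (-1) ^+ i * 'C(k, i)%:R * f i
    = \sum_(0 <= i < k.+1) (-1) ^+ i * 'C(k, i)%:R * f i.
  by rewrite big_nat_recr //= bin_small // mulr0 mul0r addr0.
rewrite big_nat_recl // bin0.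
under eq_bigr do rewrite binS natrD mulrDr mulrDl.
rewrite big_split /= addrA.
rewrite -(bin0 k) -(big_nat_recl _ _ (fun i => (-1) ^+ i * 'C(k, i)%:R * f i)) //.
rewrite shifted -big_split /=; apply: eq_bigr => i _.
by rewrite exprS; ring.
Qed.

End FiniteDifferences.

Lemma size_sub_comp_XaddC (R : idomainType) (p : {poly R}) (c : R) :
  (size (p - (p \Po ('X + c%:P)))%R <= (size p).-1)%N.
Proof.
apply/leq_sizeP => j le_j; rewrite coefB.
have size_comp : size (p \Po ('X + c%:P)) = size p by rewrite size_comp_poly2 ?size_XaddC.
have [lt_j | ge_j] := ltnP j (size p).
  have -> : j = (size p).-1 by apply/eqP; rewrite eqn_leq le_j -ltnS (leq_trans lt_j) ?leqSpred.
  rewrite -[X in _ - X]/(_`_(size p).-1) -{2}size_comp -!lead_coefE.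
  by rewrite lead_coef_comp ?size_XaddC // lead_coefXaddC expr1n mulr1 subrr.
by rewrite !nth_default ?size_comp ?subrr.
Qed.

Lemma alternating_bin_sum_poly_eq0 (R : idomainType) k (p : {poly R}) :
  (size p <= k)%N -> \sum_(0 <= i < k.+1) (-1) ^+ i * 'C(k, i)%:R * p.[i%:R] = 0.
Proof.
elim: k p => [|k IHk] p size_p.
  by move: size_p; rewrite leqn0 size_poly_eq0 => /eqP ->; rewrite big_nat1 horner0 mulr0.
rewrite alternating_bin_sumS -[RHS](IHk (p - (p \Po ('X + 1%:P)))).
  apply: eq_bigr => i _.
  by rewrite hornerD hornerN horner_comp hornerD hornerX hornerC -natr1.
by rewrite (leq_trans (size_sub_comp_XaddC _ _)) // -subn1 leq_subLR add1n.
Qed.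

Definition ffact_poly (R : nzRingType) (m : nat) : {poly R} :=
  \prod_(0 <= j < m) ('X - j%:R%:P).

Lemma size_ffact_poly (R : nzRingType) m : size (ffact_poly R m) = m.+1.
Proof. by rewrite size_prod_XsubC size_iota subn0. Qed.

Lemma size_comp_linear_leq (R : nzRingType) (p : {poly R}) (a b : R) :
  (size (p \Po (a *: 'X + b%:P)) <= size p)%N.
Proof.
have [-> | p_ne0] := eqVneq p 0; first by rewrite comp_poly0 size_poly0.
have size_p_gt0 : (0 < size p)%N by rewrite size_poly_gt0.
apply: leq_trans (size_comp_poly_leq _ _) _.
rewrite -{2}(prednK size_p_gt0) ltnS -{2}[(size p).-1]muln1 leq_mul // -subn1 leq_subLR.
rewrite (leq_trans (size_polyD _ _)) // geq_max (leq_trans (size_polyC_leq1 _)) // andbT.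
by rewrite (leq_trans (size_scale_leq _ _)) ?size_polyX.
Qed.

Section FfactPolyEval.
Variable R : comNzRingType.

Lemma horner_ffact_poly m a : (ffact_poly R m).[a%:R] = (a ^_ m)%:R.
Proof.
elim: m => [|m IHm]; first by rewrite /ffact_poly big_nil hornerC ffactn0.
rewrite /ffact_poly big_nat_recr //= hornerM -/(ffact_poly R m) IHm hornerXsubC.
have [le_ma | lt_am] := leqP m a; first by rewrite ffactnSr natrM natrB.
by rewrite !ffact_small ?mul0r // ltnW.
Qed.

Lemma horner_ffact_polyN1 m : (ffact_poly R m).[-1] = (-1) ^+ m * m`!%:R.
Proof.
elim: m => [|m IHm]; first by rewrite /ffact_poly big_nil hornerC mulr1.
rewrite /ffact_poly big_nat_recr //= hornerM -/(ffact_poly R m) IHm hornerXsubC.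
by rewrite factS natrM exprS -natr1; ring.
Qed.

End FfactPolyEval.

Lemma bin_ffact_pred (F : numFieldType) m k : (0 < k)%N ->
  'C(m, k)%:R = m%:R / k%:R * (m.-1 ^_ k.-1)%:R / (k.-1)`!%:R :> F.
Proof.
move=> k_gt0; have k_ne0 : k%:R != 0 :> F by rewrite pnatr_eq0 -lt0n.
have fact_ne0 : (k.-1)`!%:R != 0 :> F by rewrite pnatr_eq0 -lt0n fact_gt0.
have := mul_bin_diag m k.-1; rewrite -bin_ffact (prednK k_gt0) => /(congr1 (GRing.natmul (1 : F))).
by rewrite !natrM => eq_m; apply: (mulfI k_ne0); rewrite -eq_m; field; apply/andP.
Qed.

Theorem mainTheorem6 (n k : nat) (hn : (0 < n)%N) (hk : (0 < k)%N) :
  \sum_(1 <= i < k.+1) ((-1) ^+ i.-1 / i%:R * ('C(i * n, k))%:R * ('C(k, i))%:R : rat)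
  = (-1) ^+ k.-1 * n%:R / k%:R.
Proof.
have k_ne0 : k%:R != 0 :> rat by rewrite pnatr_eq0 -lt0n.
have fact_ne0 : (k.-1)`!%:R != 0 :> rat by rewrite pnatr_eq0 -lt0n fact_gt0.
pose P := ffact_poly rat k.-1 \Po (n%:R *: 'X + (-1)%:P).
have size_P : (size P <= k)%N.
  by rewrite (leq_trans (size_comp_linear_leq _ _ _)) // size_ffact_poly prednK.
have P_nat i : (0 < i)%N -> P.[i%:R] = ((i * n).-1 ^_ k.-1)%:R.
  move=> i_gt0; rewrite horner_comp -horner_ffact_poly hornerD hornerZ hornerX hornerC.
  have i_n_gt0 : (0 < i * n)%N by rewrite muln_gt0 i_gt0.
  by rewrite -natrM mulnC -{1}(prednK i_n_gt0) -natr1 addrK.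
have P0 : P.[0] = (-1) ^+ k.-1 * (k.-1)`!%:R.
  by rewrite horner_comp hornerD hornerZ hornerX hornerC mulr0 add0r horner_ffact_polyN1.
set c : rat := n%:R / (k%:R * (k.-1)`!%:R).
have term i : (0 < i)%N -> (-1) ^+ i.-1 / i%:R * 'C(i * n, k)%:R * 'C(k, i)%:R
    = - c * ((-1) ^+ i * 'C(k, i)%:R * P.[i%:R]).
  move=> i_gt0; have i_ne0 : i%:R != 0 :> rat by rewrite pnatr_eq0 -lt0n.
  have -> : (-1) ^+ i = - (-1) ^+ i.-1 :> rat by rewrite -{1}(prednK i_gt0) exprS mulN1r.
  rewrite bin_ffact_pred // P_nat // natrM /c.
  by field; rewrite i_ne0 k_ne0 fact_ne0.
rewrite (eq_big_nat _ _ (fun i hi => term i (andP hi).1)) -mulr_sumr.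
have := alternating_bin_sum_poly_eq0 size_P; rewrite big_ltn // bin0 => /eqP.
rewrite addrC addr_eq0 => /eqP ->; rewrite P0 /c.
by field; rewrite k_ne0 fact_ne0.
Qed.
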